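(* Let $G$ be a simple undirected graph on $\{1,\dots,n\}$ ($n\ge2$) with adjacency $g_{ij}$ ($g_{ii}=0$) and $m$ edges. Suppose the potential outcomes are $Y_i(\mathbf z)=\alpha_i+\beta_iz_i+\gamma\sum_jg_{ij}z_j$ for constants $\alpha_i,\beta_i,\gamma$. Under a restricted Bernoulli design with parameter $p\in(0,1)$, the estimator $$\hat\beta_{naive}=\frac{\sum_i Y_i^{obs}Z_i}{\sum_i Z_i}-\frac{\sum_i Y_i^{obs}(1-Z_i)}{\sum_i(1-Z_i)}$$ satisfies $\mathbb E[\hat\beta_{naive}]-\mathrm{DTE}=-\gamma\frac{2m}{n(n-1)}$, where $\mathrm{DTE}=\frac1n\sum_i\beta_i$.
   Context: Restricted Bernoulli design with parameter $p$: $P(\mathbf Z=\mathbf z)=p^{|\mathbf z|}(1-p)^{n-|\mathbf z|}/(1-p^n-(1-p)^n)$ if $0<|\mathbf z|<n$ and $0$ otherwise, where $|\mathbf z|=\sum_iz_i$. $Y_i^{obs}=Y_i(\mathbf Z)$. DTE is the average over units of the outcome when the unit is treated and no neighbor is treated minus the outcome when no unit is treated. *)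

From mathcomp Require Import all_boot all_order all_algebra.
Set Implicit Arguments. Unset Strict Implicit. Unset Printing Implicit Defensive.
Import Order.TTheory GRing.Theory Num.Theory.
Local Open Scope ring_scope.

Notation assignment n := {ffun 'I_n -> bool}.

Definition ntreated n (z : assignment n) : nat := #|[set i | z i]|.

Definition rbern_prob (R : fieldType) n (p : R) (z : assignment n) : R :=
  if (0 < ntreated z)%N && (ntreated z < n)%N then
    p ^+ ntreated z * (1 - p) ^+ (n - ntreated z) / (1 - p ^+ n - (1 - p) ^+ n)
  else 0.

Definition rbern_E (R : fieldType) n (p : R) (X : assignment n -> R) : R :=
  \sum_(z : assignment n) rbern_prob p z * X z.

Definition simple_graph n (g : 'I_n -> 'I_n -> bool) : Prop :=
  (forall i j, g i j = g j i) /\ (forall i, g i i = false).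

Definition nedges n (g : 'I_n -> 'I_n -> bool) : nat :=
  #|[set e : 'I_n * 'I_n | (e.1 < e.2)%N && g e.1 e.2]|.

Definition lin_outcome (R : ringType) n (g : 'I_n -> 'I_n -> bool)
  (alpha beta : 'I_n -> R) (gamma : R) (i : 'I_n) (z : assignment n) : R :=
  alpha i + beta i * (z i)%:R + gamma * \sum_j (g i j)%:R * (z j)%:R.

Definition only n (i : 'I_n) : assignment n := [ffun j => j == i].
Definition none n : assignment n := [ffun _ => false].

(* Direct treatment effect: average over units of the outcome when the unit is
   treated and no neighbour (indeed no other unit) is treated, minus the outcome
   when no unit is treated. *)
Definition DTE (R : fieldType) n (Y : 'I_n -> assignment n -> R) : R :=
  (n%:R)^-1 * \sum_i (Y i (only i) - Y i (none n)).

Definition beta_naive (R : fieldType) n (Y : 'I_n -> assignment n -> R)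
  (z : assignment n) : R :=
  (\sum_i Y i z * (z i)%:R) / (\sum_i ((z i)%:R : R))
  - (\sum_i Y i z * (1 - (z i)%:R)) / (\sum_i (1 - ((z i)%:R : R))).

From mathcomp Require Import all_boot all_order all_algebra all_fingroup.
From mathcomp Require Import ring lra.
Import Order.TTheory GRing.Theory Num.Theory.
Set Implicit Arguments. Unset Strict Implicit. Unset Printing Implicit Defensive.
Local Open Scope ring_scope.

(* The naive estimator is linear in the outcomes: beta_naive(z) = sum_i Y_i(z) w_i(z)
   with w_i(z) = z_i/|z| - (1 - z_i)/(n - |z|).  The design is exchangeable (its law
   depends on z only through |z|), so averaging over relabellings of the units gives
   E[w_i] = 1/n - 1/n = 0, E[z_i w_i] = E[z_i/|z|] = 1/n and, for j <> i,
   n(n-1) E[z_j w_i] = E[|z| - 1] - E[|z|] = -1.  Hence the alpha_i cancel, the beta_i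
   produce the DTE, and each of the 2m ordered pairs of neighbours contributes
   -gamma/(n(n-1)). *)

Definition relabel n (s : {perm 'I_n}) (z : assignment n) : assignment n :=
  [ffun i => z (s i)].

Definition all_treated n : assignment n := [ffun => true].

Lemma relabel_inj n (s : {perm 'I_n}) : injective (relabel s).
Proof.
move=> z1 z2 /ffunP eq_z; apply/ffunP => i.
by have := eq_z (s^-1%g i); rewrite !ffunE permKV.
Qed.

Lemma ntreated_relabel n (s : {perm 'I_n}) z : ntreated (relabel s z) = ntreated z.
Proof.
rewrite /ntreated -[RHS](card_preimset _ (@perm_inj _ s)).
by apply: eq_card => i; rewrite !inE ffunE.
Qed.

Lemma ntreated_le n (z : assignment n) : (ntreated z <= n)%N.
Proof. by rewrite -[n in (_ <= n)%N]card_ord max_card. Qed.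

Lemma ntreated_eq0 n (z : assignment n) : (ntreated z == 0%N) = (z == none n).
Proof.
rewrite cards_eq0; apply/eqP/eqP => [/setP z0 | ->].
  by apply/ffunP => i; have := z0 i; rewrite !inE ffunE => ->.
by apply/setP => i; rewrite !inE ffunE.
Qed.

Lemma ntreated_eqn n (z : assignment n) : (ntreated z == n) = (z == all_treated n).
Proof.
apply/eqP/eqP => [z_n | ->].
  have /eqP/setP zT : [set i | z i] == [set: 'I_n].
    by rewrite eqEcard subsetT cardsT card_ord -[X in (X <= _)%N]z_n leqnn.
  by apply/ffunP => i; have := zT i; rewrite !inE ffunE.
by rewrite /ntreated -[RHS]card_ord; apply: eq_card => i; rewrite !inE ffunE.
Qed.

Lemma ntreated_none n : ntreated (none n) = 0%N.
Proof. by apply/eqP; rewrite ntreated_eq0. Qed.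

Lemma ntreated_all_treated n : ntreated (all_treated n) = n.
Proof. by apply/eqP; rewrite ntreated_eqn. Qed.

Lemma ntreated_interior n (z : assignment n) :
  (0 < ntreated z < n)%N = (z != none n) && (z != all_treated n).
Proof. by rewrite -ntreated_eq0 -ntreated_eqn lt0n ltn_neqAle ntreated_le andbT. Qed.

Lemma sum_treatedE (R : pzSemiRingType) n (z : assignment n) :
  \sum_i ((z i)%:R : R) = (ntreated z)%:R.
Proof.
rewrite /ntreated -sum1_card natr_sum [RHS]big_mkcond /=.
by apply: eq_bigr => i _; rewrite inE; case: (z i).
Qed.

Lemma bernoulli_probE (R : comPzRingType) n (p : R) (z : assignment n) :
  p ^+ ntreated z * (1 - p) ^+ (n - ntreated z) =
  \prod_i (if z i then p else 1 - p).
Proof.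
symmetry; rewrite (bigID (mem [set i | z i])) /=.
rewrite (eq_bigr (fun=> p)) => [|i]; last by rewrite inE => ->.
rewrite [X in _ * X](eq_bigr (fun=> 1 - p)) => [|i]; last by rewrite inE => /negbTE ->.
rewrite !prodr_const; congr (_ * _ ^+ _).
by rewrite /ntreated -[n in (n - _)%N]card_ord -(cardC [set i | z i]) addKn.
Qed.

Lemma bernoulli_prob_sum1 (R : comPzRingType) n (p : R) :
  \sum_(z : assignment n) p ^+ ntreated z * (1 - p) ^+ (n - ntreated z) = 1.
Proof.
under eq_bigr do rewrite bernoulli_probE.
rewrite -(bigA_distr_bigA (fun i (b : bool) => if b then p else 1 - p)) /=.
by rewrite big1 // => i _; rewrite big_bool /= addrC subrK.
Qed.

Lemma rbern_prob_sum1 (R : fieldType) n (p : R) : (0 < n)%N ->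
  1 - p ^+ n - (1 - p) ^+ n != 0 -> \sum_(z : assignment n) rbern_prob p z = 1.
Proof.
move=> n_gt0 D_neq0.
have none_all : none n != all_treated n.
  by rewrite -ntreated_eqn ntreated_none eq_sym -lt0n.
rewrite /rbern_prob -big_mkcond -mulr_suml /=.
under eq_bigl do rewrite ntreated_interior.
have := bernoulli_prob_sum1 n p.
rewrite (bigD1 (none n)) // (bigD1 (all_treated n)) 1?eq_sym //=.
rewrite ntreated_none ntreated_all_treated subn0 subnn !expr0 mulr1 mul1r.
set S := \sum_(z | _) _ => /(canRL (addKr _)) /(canRL (addKr _)) S_eq.
by rewrite [S](_ : _ = 1 - p ^+ n - (1 - p) ^+ n) ?divff // S_eq; ring.
Qed.

Lemma rbern_normalizer_gt0 (R : realFieldType) n (p : R) :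
  (1 < n)%N -> 0 < p -> p < 1 -> 0 < 1 - p ^+ n - (1 - p) ^+ n.
Proof.
move=> n_gt1 p_gt0 p_lt1.
have : p ^+ n < p by rewrite -[ltRHS]expr1 ltr_iXn2l.
have : (1 - p) ^+ n < 1 - p.
  by rewrite -[ltRHS]expr1 ltr_iXn2l // ?subr_gt0 // ltrBlDr ltrDl.
lra.
Qed.

Lemma exists_perm2 (T : finType) (i j i' j' : T) : i != j -> i' != j' ->
  exists s : {perm T}, s i = i' /\ s j = j'.
Proof.
move=> ij i'j'; pose k := tperm i i' j.
have k_i' : k != i'.
  by rewrite -(inj_eq (@perm_inj _ (tperm i i'))) tpermK tpermR eq_sym.
exists (tperm i i' * tperm k j')%g.
rewrite !permM -/k tpermL; split; first by rewrite tpermD // eq_sym.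
by rewrite tpermL.
Qed.

Lemma sum_offdiag_mul (R : pzRingType) (I : finType) (f g : I -> R) :
  \sum_a \sum_(b | b != a) f a * g b =
  (\sum_a f a) * (\sum_b g b) - \sum_a f a * g a.
Proof.
rewrite big_distrl -sumrB; apply: eq_bigr => a _.
by rewrite big_distrr [X in X - _](bigD1 a) //= addrC addKr.
Qed.

Section Exchangeable.

Variables (R : pzRingType) (n : nat) (W : assignment n -> R).
Hypothesis W_relabel : forall (s : {perm 'I_n}) z, W (relabel s z) = W z.

Lemma exchangeable_sum_coord (phi : bool -> R) (i j : 'I_n) :
  \sum_z W z * phi (z i) = \sum_z W z * phi (z j).
Proof.
rewrite (reindex_inj (@relabel_inj _ (tperm i j))); apply: eq_bigr => z _.
by rewrite W_relabel ffunE tpermL.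
Qed.

Lemma exchangeable_sum_pair (phi : bool -> bool -> R) (i j i' j' : 'I_n) :
  i != j -> i' != j' ->
  \sum_z W z * phi (z i) (z j) = \sum_z W z * phi (z i') (z j').
Proof.
move=> ij i'j'; have [s [si sj]] := exists_perm2 ij i'j'.
rewrite (reindex_inj (@relabel_inj _ s)); apply: eq_bigr => z _.
by rewrite W_relabel !ffunE si sj.
Qed.

Lemma exchangeable_mean_coord (phi : bool -> R) (i : 'I_n) :
  n%:R * \sum_z W z * phi (z i) = \sum_z W z * \sum_a phi (z a).
Proof.
under [RHS]eq_bigr do rewrite big_distrr.
rewrite exchange_big (eq_bigr (fun=> \sum_z W z * phi (z i))) => [|a _].
  by rewrite sumr_const card_ord mulr_natl.
exact: exchangeable_sum_coord.
Qed.

Lemma exchangeable_mean_pair (phi : bool -> bool -> R) (i j : 'I_n) : i != j ->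
  (n * n.-1)%:R * \sum_z W z * phi (z i) (z j) =
  \sum_z W z * \sum_a \sum_(b | b != a) phi (z a) (z b).
Proof.
move=> ij; set S := \sum_z _.
transitivity (\sum_a \sum_(b | b != a) \sum_z W z * phi (z a) (z b)); last first.
  rewrite (eq_bigr (fun a => \sum_z \sum_(b | b != a) W z * phi (z a) (z b))) => [|a _].
    rewrite exchange_big; apply: eq_bigr => z _; rewrite big_distrr.
    by apply: eq_bigr => a _; rewrite big_distrr.
  exact: exchange_big.
rewrite (eq_bigr (fun=> S *+ n.-1)) => [|a _].
  by rewrite sumr_const card_ord -mulrnA mulr_natl mulnC.
rewrite (eq_bigr (fun=> S)) => [|b ba].
  by rewrite sumr_const; congr (_ *+ _); rewrite -[in RHS](card_ord n) -(cardC1 a).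
by rewrite (exchangeable_sum_pair _ _ ij) // eq_sym.
Qed.

End Exchangeable.

(* For |z| = 0 or |z| = n one of the inverses is the junk value 0^-1 = 0; such z
   have probability 0 under the design (rbern_prob_mulKtreated/control). *)
Definition dm_weight {R : fieldType} n (z : assignment n) (i : 'I_n) : R :=
  (ntreated z)%:R^-1 * (z i)%:R - (n%:R - (ntreated z)%:R)^-1 * (1 - (z i)%:R).

Lemma beta_naive_dm_weightE (R : fieldType) n (Y : 'I_n -> assignment n -> R) z :
  beta_naive Y z = \sum_i Y i z * dm_weight z i.
Proof.
rewrite /beta_naive sumrB sumr_const card_ord sum_treatedE !mulr_suml -sumrB.
by apply: eq_bigr => i _; rewrite /dm_weight; ring.
Qed.

Section RestrictedBernoulli.

Variables (R : numFieldType) (n : nat) (p : R).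

Local Notation E := (@rbern_E R n p).
Local Notation k z := ((ntreated z)%:R : R).

Lemma eq_rbern_E (X Y : assignment n -> R) : X =1 Y -> E X = E Y.
Proof. by move=> eqXY; apply: eq_bigr => z _; rewrite eqXY. Qed.

Lemma rbern_ED (X Y : assignment n -> R) : E (fun z => X z + Y z) = E X + E Y.
Proof. by rewrite -big_split; apply: eq_bigr => z _; rewrite mulrDr. Qed.

Lemma rbern_EB (X Y : assignment n -> R) : E (fun z => X z - Y z) = E X - E Y.
Proof. by rewrite -sumrB; apply: eq_bigr => z _; rewrite mulrBr. Qed.

Lemma rbern_EZ (a : R) (X : assignment n -> R) : E (fun z => a * X z) = a * E X.
Proof. by rewrite /rbern_E big_distrr; apply: eq_bigr => z _; rewrite mulrCA. Qed.

Lemma rbern_E_sum (I : finType) (X : I -> assignment n -> R) :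
  E (fun z => \sum_i X i z) = \sum_i E (X i).
Proof. by rewrite exchange_big; apply: eq_bigr => z _; rewrite big_distrr. Qed.

Lemma rbern_prob_relabel (s : {perm 'I_n}) (z : assignment n) :
  rbern_prob p (relabel s z) = rbern_prob p z.
Proof. by rewrite /rbern_prob ntreated_relabel. Qed.

Lemma rbern_prob_interior (z : assignment n) :
  rbern_prob p z != 0 -> (0 < ntreated z < n)%N.
Proof. by rewrite /rbern_prob; case: ifP; rewrite ?eqxx. Qed.

Lemma rbern_prob_mulKtreated (z : assignment n) x :
  rbern_prob p z * ((k z)^-1 * (k z * x)) = rbern_prob p z * x.
Proof.
have [->|/rbern_prob_interior/andP[k_gt0 _]] := eqVneq (rbern_prob p z) 0.
  by rewrite !mul0r.
by rewrite mulKf // pnatr_eq0 -lt0n.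
Qed.

Lemma rbern_prob_mulKcontrol (z : assignment n) x :
  rbern_prob p z * ((n%:R - k z)^-1 * ((n%:R - k z) * x)) = rbern_prob p z * x.
Proof.
have [->|/rbern_prob_interior/andP[_ k_lt_n]] := eqVneq (rbern_prob p z) 0.
  by rewrite !mul0r.
by rewrite mulKf // subr_eq0 eqr_nat eq_sym ltn_eqF.
Qed.

Lemma rbern_E_mean_coord (c : nat -> R) (phi : bool -> R) (i : 'I_n) :
  n%:R * E (fun z => c (ntreated z) * phi (z i)) =
  E (fun z => c (ntreated z) * \sum_a phi (z a)).
Proof.
rewrite /rbern_E; under eq_bigr do rewrite mulrA; under [RHS]eq_bigr do rewrite mulrA.
by apply: exchangeable_mean_coord => s z; rewrite rbern_prob_relabel ntreated_relabel.
Qed.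

Lemma rbern_E_mean_pair (c : nat -> R) (phi : bool -> bool -> R) (i j : 'I_n) :
  i != j ->
  (n * n.-1)%:R * E (fun z => c (ntreated z) * phi (z i) (z j)) =
  E (fun z => c (ntreated z) * \sum_a \sum_(b | b != a) phi (z a) (z b)).
Proof.
rewrite /rbern_E; under eq_bigr do rewrite mulrA; under [RHS]eq_bigr do rewrite mulrA.
by apply: exchangeable_mean_pair => s z; rewrite rbern_prob_relabel ntreated_relabel.
Qed.

Hypotheses (n_gt1 : (1 < n)%N) (normalizer_neq0 : 1 - p ^+ n - (1 - p) ^+ n != 0).

Lemma rbern_E1 : E (fun => 1) = 1.
Proof.
rewrite -[RHS](rbern_prob_sum1 (ltnW n_gt1) normalizer_neq0).
by apply: eq_bigr => z _; rewrite mulr1.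
Qed.

Let n_neq0 : (n%:R : R) != 0.
Proof. by rewrite pnatr_eq0 -lt0n ltnW. Qed.

Let npairs_neq0 : (n%:R * (n%:R - 1) : R) != 0.
Proof.
rewrite mulf_neq0 // subr_eq0 pnatr_eq1.
by case: n n_gt1 => [|[]].
Qed.

Lemma rbern_E_treated_share (i : 'I_n) : E (fun z => (k z)^-1 * (z i)%:R) = n%:R^-1.
Proof.
apply: (mulfI n_neq0).
rewrite divff // (rbern_E_mean_coord (fun m => m%:R^-1) (fun b => b%:R)).
under eq_rbern_E do rewrite sum_treatedE.
rewrite -[RHS]rbern_E1; apply: eq_bigr => z _.
by rewrite -[X in _^-1 * X]mulr1 rbern_prob_mulKtreated.
Qed.

Lemma rbern_E_control_share (i : 'I_n) :
  E (fun z => (n%:R - k z)^-1 * (1 - (z i)%:R)) = n%:R^-1.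
Proof.
apply: (mulfI n_neq0).
rewrite divff // (rbern_E_mean_coord (fun m => (n%:R - m%:R)^-1) (fun b => 1 - b%:R)).
under eq_rbern_E do rewrite sumrB sumr_const card_ord sum_treatedE.
rewrite -[RHS]rbern_E1; apply: eq_bigr => z _.
by rewrite -[X in _^-1 * X]mulr1 rbern_prob_mulKcontrol.
Qed.

Lemma rbern_E_pair_contrast (i j : 'I_n) : i != j ->
  E (fun z => (k z)^-1 * ((z i)%:R * (z j)%:R)
              - (n%:R - k z)^-1 * ((1 - (z i)%:R) * (z j)%:R))
  = - (n%:R * (n%:R - 1))^-1.
Proof.
move=> ij; apply: (mulfI npairs_neq0).
have npairsE : n%:R * (n%:R - 1) = (n * n.-1)%:R :> R.
  by rewrite natrM -subn1 natrB // ltnW.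
rewrite mulrN divff // rbern_EB mulrBr npairsE.
rewrite (rbern_E_mean_pair (fun m => m%:R^-1) (fun x y => x%:R * y%:R) ij).
rewrite (rbern_E_mean_pair (fun m => (n%:R - m%:R)^-1) (fun x y => (1 - x%:R) * y%:R) ij).
have -> : E (fun z => (k z)^-1 * \sum_a \sum_(b | b != a) (z a)%:R * (z b)%:R)
          = E (fun z => k z - 1).
  apply: eq_bigr => z _; rewrite sum_offdiag_mul sum_treatedE.
  under eq_bigr do rewrite -natrM mulnb andbb.
  by rewrite sum_treatedE -[X in _ - X]mulr1 -mulrBr rbern_prob_mulKtreated.
have -> : E (fun z => (n%:R - k z)^-1 *
                      \sum_a \sum_(b | b != a) (1 - (z a)%:R) * (z b)%:R)
          = E (fun z => k z).
  apply: eq_bigr => z _; rewrite sum_offdiag_mul sumrB sumr_const card_ord sum_treatedE.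
  rewrite big1 => [|a _]; last by case: (z a); rewrite ?subrr ?mul0r ?mulr0.
  by rewrite subr0 rbern_prob_mulKcontrol.
by rewrite rbern_EB rbern_E1 addrAC subrr add0r.
Qed.

Lemma rbern_E_dm_weight (i : 'I_n) : E (fun z => dm_weight z i) = 0.
Proof. by rewrite rbern_EB rbern_E_treated_share rbern_E_control_share subrr. Qed.

Lemma rbern_E_treated_dm_weight (i : 'I_n) :
  E (fun z => (z i)%:R * dm_weight z i) = n%:R^-1.
Proof.
rewrite -(rbern_E_treated_share i); apply: eq_rbern_E => z.
by rewrite /dm_weight; case: (z i) => /=; ring.
Qed.

Lemma rbern_E_spillover_dm_weight (i j : 'I_n) : i != j ->
  E (fun z => (z j)%:R * dm_weight z i) = - (n%:R * (n%:R - 1))^-1.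
Proof.
move=> ij; rewrite -(rbern_E_pair_contrast ij); apply: eq_rbern_E => z.
by rewrite /dm_weight; ring.
Qed.

Lemma rbern_E_outcome_dm_weight (g : 'I_n -> 'I_n -> bool) alpha beta gamma
    (i : 'I_n) : g i i = false ->
  E (fun z => lin_outcome g alpha beta gamma i z * dm_weight z i) =
  n%:R^-1 * beta i - gamma * (\sum_j (g i j)%:R) / (n%:R * (n%:R - 1)).
Proof.
move=> g_ii.
under eq_rbern_E => z.
  rewrite /lin_outcome !mulrDl -!mulrA mulr_suml.
  under eq_bigr do rewrite -mulrA.
  over.
rewrite !rbern_ED !rbern_EZ rbern_E_sum rbern_E_dm_weight rbern_E_treated_dm_weight.
under eq_bigr => j _ do rewrite rbern_EZ.
rewrite (eq_bigr (fun j => (g i j)%:R * - (n%:R * (n%:R - 1))^-1)) => [|j _].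
  by rewrite -mulr_suml; ring.
have [->|ji] := eqVneq j i; first by rewrite g_ii !mul0r.
by rewrite rbern_E_spillover_dm_weight // eq_sym.
Qed.

End RestrictedBernoulli.

Lemma sum_adjacency (R : pzSemiRingType) n (g : 'I_n -> 'I_n -> bool) :
  simple_graph g -> \sum_i \sum_j ((g i j)%:R : R) = (2 * nedges g)%:R.
Proof.
case=> g_sym g_irr.
have nedgesE :
    (nedges g)%:R = \sum_(i : 'I_n) \sum_(j : 'I_n) (((i < j)%N && g i j)%:R : R).
  rewrite /nedges -sum1_card natr_sum pair_bigA big_mkcond /=.
  by apply: eq_bigr => e _; rewrite inE; case: ifP.
transitivity (\sum_(i : 'I_n) \sum_(j : 'I_n) (((i < j)%N && g i j)%:R : R) +
              \sum_(i : 'I_n) \sum_(j : 'I_n) (((j < i)%N && g i j)%:R : R)).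
  rewrite -big_split; apply: eq_bigr => i _; rewrite -big_split; apply: eq_bigr => j _.
  case: (ltngtP i j) => [||/val_inj ->] /=; rewrite ?addr0 ?add0r ?g_irr //.
rewrite mul2n -addnn natrD -nedgesE; congr (_ + _).
rewrite exchange_big nedgesE; apply: eq_bigr => i _.
by apply: eq_bigr => j _; rewrite g_sym.
Qed.

Lemma DTE_lin_outcome (R : fieldType) n (g : 'I_n -> 'I_n -> bool) alpha beta
    (gamma : R) :
  (forall i, g i i = false) ->
  DTE (lin_outcome g alpha beta gamma) = n%:R^-1 * \sum_i beta i.
Proof.
move=> g_irr; rewrite /DTE; congr (_ * _); apply: eq_bigr => i _.
rewrite /lin_outcome !ffunE eqxx (bigD1 i) //= ffunE g_irr mul0r add0r.
rewrite !big1 => [|j _|j /negbTE ji]; rewrite ?ffunE ?ji ?mulr0 //.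
by rewrite !addr0 mulr1 addrC addKr.
Qed.

Theorem proposition13 (R : realFieldType) (n : nat) (hn : (2 <= n)%N)
  (g : 'I_n -> 'I_n -> bool) (hg : simple_graph g)
  (alpha beta : 'I_n -> R) (gamma p : R) (hp0 : 0 < p) (hp1 : p < 1) :
  rbern_E p (beta_naive (lin_outcome g alpha beta gamma))
    - DTE (lin_outcome g alpha beta gamma)
  = - gamma * ((2 * nedges g)%:R / (n%:R * (n%:R - 1))).
Proof.
have [_ g_irr] := hg.
have normalizer_neq0 := lt0r_neq0 (rbern_normalizer_gt0 hn hp0 hp1).
rewrite DTE_lin_outcome //.
under eq_rbern_E do rewrite beta_naive_dm_weightE.
rewrite rbern_E_sum.
under eq_bigr do rewrite rbern_E_outcome_dm_weight ?g_irr //.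
rewrite sumrB -mulr_sumr -mulr_suml -mulr_sumr sum_adjacency //.
ring.
Qed.
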